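(* Let $H:[0,1]\times\mathbb R\to\mathbb R$ be continuous, coercive in $p$, and quasiconvex in $p$ with $\mathrm{Int}\{p: H(s,p)\le b\}=\{p:H(s,p)<b\}$ for all $s,b$. Let $a_H=\max_{s}\min_{p}H(s,p)$, let $a\ge a_H$, and if $a=a_H$ assume that $s\mapsto\min_pH(s,p)$ is constant on $[0,1]$. Let $\sigma^+_a(s)=\max\{p:H(s,p)=a\}$. Let $w$ be continuous on $[0,1]$ and a viscosity solution of $H(s,w'(s))=a$ in $(0,1)$. Then the following are equivalent: (1) $H(1,\varphi'(1))\ge a$ for every $\varphi\in C^1([0,1])$ that is a constrained subtangent to $w$ at $1$, i.e. $\varphi(1)=w(1)$ and $w\ge\varphi$ on $(1-\delta,1)$ for some $\delta>0$; (2) $w(s)=w(0)+\int_0^s\sigma^+_a(t)\,dt$ for all $s\in[0,1]$ (i.e. $w$ is the maximal subsolution of $H(s,u')=a$ in $(0,1)$ taking the value $w(0)$ at $0$).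
   Context: Coercive in $p$ means $H(s,p)\to+\infty$ as $|p|\to\infty$ uniformly in $s$; quasiconvex means convex sublevel sets in $p$. Sub/solutions are in the viscosity sense. *)

From Stdlib Require Export Reals.
Open Scope R_scope.

Definition in01 (s : R) : Prop := 0 <= s <= 1.

Definition H_cont01 (H : R -> R -> R) : Prop :=
  forall s p, in01 s -> forall eps, 0 < eps -> exists del, 0 < del /\
    forall s' p', in01 s' -> Rabs (s' - s) < del -> Rabs (p' - p) < del ->
      Rabs (H s' p' - H s p) < eps.

Definition coercive01 (H : R -> R -> R) : Prop :=
  forall M, exists K, forall s p, in01 s -> K < Rabs p -> M < H s p.

Definition quasiconvex01 (H : R -> R -> R) : Prop :=
  forall s, in01 s -> forall b p q t, H s p <= b -> H s q <= b -> 0 <= t <= 1 ->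
    H s (t * p + (1 - t) * q) <= b.

Definition in_interior (P : R -> Prop) (p : R) : Prop :=
  exists eps, 0 < eps /\ forall q, Rabs (q - p) < eps -> P q.

Definition interior_cond01 (H : R -> R -> R) : Prop :=
  forall s b p, in01 s -> (in_interior (fun q => H s q <= b) p <-> H s p < b).

Definition is_min_value (f : R -> R) (m : R) : Prop :=
  (exists p, f p = m) /\ forall p, m <= f p.

Definition is_max_on (g : R -> R) (A : R -> Prop) (v : R) : Prop :=
  (exists s, A s /\ g s = v) /\ forall s, A s -> g s <= v.

Definition is_max_elem (P : R -> Prop) (v : R) : Prop :=
  P v /\ forall p, P p -> p <= v.

Definition cont01 (w : R -> R) : Prop :=
  forall x, in01 x -> forall eps, 0 < eps -> exists del, 0 < del /\
    forall y, in01 y -> Rabs (y - x) < del -> Rabs (w y - w x) < eps.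

Definition is_C1 (phi dphi : R -> R) : Prop :=
  (forall x, derivable_pt_lim phi x (dphi x)) /\ continuity dphi.

Definition visc_sub (H : R -> R -> R) (a : R) (w : R -> R) : Prop :=
  forall s0, 0 < s0 < 1 -> forall phi dphi, is_C1 phi dphi ->
    (exists d, 0 < d /\ forall x, Rabs (x - s0) < d -> w x - phi x <= w s0 - phi s0) ->
    H s0 (dphi s0) <= a.

Definition visc_super (H : R -> R -> R) (a : R) (w : R -> R) : Prop :=
  forall s0, 0 < s0 < 1 -> forall phi dphi, is_C1 phi dphi ->
    (exists d, 0 < d /\ forall x, Rabs (x - s0) < d -> w s0 - phi s0 <= w x - phi x) ->
    a <= H s0 (dphi s0).

Definition visc_sol (H : R -> R -> R) (a : R) (w : R -> R) : Prop :=
  visc_sub H a w /\ visc_super H a w.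

From Stdlib Require Import Reals Lra Lia IndefiniteDescription.
From Coquelicot Require Import Coquelicot.
Open Scope R_scope.

(* Since H(s,p) > a for p > σ_a(s), touching w from above by ∫σ_a + K(t-x)^N with a steep
   power shows that w - ∫σ_a is nonincreasing, i.e. w(s) ≤ w(0) + ∫_0^s σ_a.
   For the reverse inequality under (1): if a = a_H, then a is the minimum of every H(s,·),
   so H(s,p) > a also for p < σ_a(s) and the mirror comparison applies.  If a > a_H, let τ(s)
   be the largest point of a level b ∈ (a_H, a); by quasiconvexity and the interior condition
   H(s,·) < a strictly between τ(s) and σ_a(s), so φ = ∫((1-θ)σ_a + θτ) is a strict
   subsolution.  Then w - φ attains its minimum over [0,1] at 0: an interior minimum
   contradicts the supersolution property and a minimum at 1 contradicts (1).  Letting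
   θ → 0 gives w(s) ≥ w(0) + ∫_0^s σ_a.
   Conversely, if w = w(0) + ∫σ_a, a C¹ subtangent at 1 has slope at least σ_a(1), where
   H(1,·) ≥ a.  All of this needs σ_a continuous, which follows from the same
   quasiconvexity and interior condition. *)

(* Functions given on [[0,1]] are extended by constants, so that Coquelicot's integral and
   derivative of their primitive are available on all of [R]. *)
Definition clamp01 (t : R) : R := Rmax 0 (Rmin 1 t).

Definition ext01 (f : R -> R) (t : R) : R := f (clamp01 t).

Definition prim01 (f : R -> R) (t : R) : R := RInt (ext01 f) 0 t.

Definition local_max (f : R -> R) (z : R) : Prop :=
  exists d, 0 < d /\ forall x, Rabs (x - z) < d -> f x <= f z.

Lemma clamp01_in01 t : in01 (clamp01 t).
Proof. unfold clamp01, in01, Rmax, Rmin. repeat destruct Rle_dec; lra. Qed.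

Lemma clamp01_id t : in01 t -> clamp01 t = t.
Proof. unfold clamp01, in01, Rmax, Rmin. intros. repeat destruct Rle_dec; lra. Qed.

Lemma clamp01_lipschitz x y : Rabs (clamp01 y - clamp01 x) <= Rabs (y - x).
Proof.
  unfold clamp01, Rmax, Rmin. repeat destruct Rle_dec;
  repeat (match goal with |- context [Rabs ?u] => destruct (Rcase_abs u);
     [rewrite (Rabs_left u) by lra | rewrite (Rabs_pos_eq u) by lra] end); lra.
Qed.

Lemma ext01_id f t : in01 t -> ext01 f t = f t.
Proof. intros; unfold ext01; rewrite clamp01_id; auto. Qed.

Lemma ext01_continuity f : cont01 f -> continuity (ext01 f).
Proof.
  intros Hf x eps Heps. destruct (Hf (clamp01 x) (clamp01_in01 x) eps Heps) as [d [Hd Hfd]].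
  exists d. split; [lra|]. intros y [_ Hy]. apply Hfd; [apply clamp01_in01|].
  eapply Rle_lt_trans; [apply clamp01_lipschitz | exact Hy].
Qed.

Lemma continuity_cont01 f : continuity f -> cont01 f.
Proof.
  intros Hf x _ eps Heps. destruct (Hf x eps Heps) as [d [Hd Hfd]].
  exists d; split; [lra|]. intros y _ Hy.
  destruct (Req_dec y x) as [->|Hyx]; [rewrite Rminus_diag, Rabs_R0; lra|].
  apply (Hfd y). split; [split; [exact I | auto] | exact Hy].
Qed.

Lemma cont01_minus f g : cont01 f -> cont01 g -> cont01 (fun t => f t - g t).
Proof.
  intros Hf Hg x Hx eps Heps.
  destruct (Hf x Hx (eps / 2)) as [d1 [Hd1 Hf1]]; [lra|].
  destruct (Hg x Hx (eps / 2)) as [d2 [Hd2 Hg2]]; [lra|].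
  exists (Rmin d1 d2); split; [apply Rmin_pos; lra|]. intros y Hy Hyx.
  assert (A := Hf1 y Hy (Rlt_le_trans _ _ _ Hyx (Rmin_l _ _))).
  assert (B := Hg2 y Hy (Rlt_le_trans _ _ _ Hyx (Rmin_r _ _))).
  apply Rabs_def2 in A; apply Rabs_def2 in B. apply Rabs_def1; lra.
Qed.

Lemma prim01_derive f : cont01 f -> forall t, derivable_pt_lim (prim01 f) t (ext01 f t).
Proof.
  intros Hf t. apply is_derive_Reals. unfold prim01.
  apply (is_derive_RInt (ext01 f) (fun b => RInt (ext01 f) 0 b) 0 t).
  - apply filter_forall. intros b. apply (@RInt_correct R_CompleteNormedModule).
    apply ex_RInt_continuous. intros z _.
    apply continuity_pt_filterlim, ext01_continuity, Hf.
  - apply continuity_pt_filterlim, ext01_continuity, Hf.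
Qed.

Lemma prim01_C1 f : cont01 f -> is_C1 (prim01 f) (ext01 f).
Proof. split; [apply prim01_derive | apply ext01_continuity]; auto. Qed.

Lemma prim01_continuity f : cont01 f -> continuity (prim01 f).
Proof. intros Hf t. apply derivable_continuous_pt. exists (ext01 f t). apply prim01_derive, Hf. Qed.

Lemma prim01_0 f : prim01 f 0 = 0.
Proof. unfold prim01. rewrite RInt_point. reflexivity. Qed.

Lemma RiemannInt_prim01 f s : cont01 f -> in01 s -> forall w0 ws,
  (exists pr : Riemann_integrable f 0 s, ws = w0 + RiemannInt pr) <-> ws = w0 + prim01 f s.
Proof.
  intros Hf Hs w0 ws.
  assert (Eext : forall x, Rmin 0 s < x < Rmax 0 s -> ext01 f x = f x).
  { intros x. unfold in01 in Hs. rewrite Rmin_left, Rmax_right by lra.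
    intros Hx. apply ext01_id. unfold in01; lra. }
  assert (Hint : ex_RInt (ext01 f) 0 s).
  { apply (@ex_RInt_continuous R_CompleteNormedModule). intros z _.
    apply continuity_pt_filterlim, ext01_continuity, Hf. }
  set (pr0 := ex_RInt_Reals_0 _ _ _ (ex_RInt_ext _ _ _ _ Eext Hint)).
  assert (E0 : RiemannInt pr0 = prim01 f s).
  { unfold pr0. rewrite <- RInt_Reals. apply RInt_ext. intros x Hx. symmetry. auto. }
  split.
  - intros [pr ->]. rewrite (RiemannInt_P5 pr pr0), E0. reflexivity.
  - intros ->. exists pr0. rewrite E0. reflexivity.
Qed.

Lemma is_C1_continuity f df : is_C1 f df -> continuity f.
Proof. intros [Hf _] t. apply derivable_continuous_pt. exists (df t). apply Hf. Qed.

Lemma is_C1_plus f df g dg : is_C1 f df -> is_C1 g dg ->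
  is_C1 (fun t => f t + g t) (fun t => df t + dg t).
Proof.
  intros [Hf Cf] [Hg Cg]. split.
  - intros t. apply derivable_pt_lim_plus; auto.
  - apply continuity_plus; auto.
Qed.

Lemma is_C1_scal c f df : is_C1 f df -> is_C1 (fun t => c * f t) (fun t => c * df t).
Proof.
  intros [Hf Cf]. split.
  - intros t. apply (derivable_pt_lim_scal f); auto.
  - apply (continuity_scal df); auto.
Qed.

Lemma is_C1_plus_const f df c : is_C1 f df -> is_C1 (fun t => f t + c) df.
Proof.
  intros [Hf Cf]. split; auto. intros t. replace (df t) with (df t + 0) by ring.
  apply derivable_pt_lim_plus; [apply Hf | apply derivable_pt_lim_const].
Qed.

Lemma is_C1_reflect f df : is_C1 f df -> is_C1 (fun t => f (1 - t)) (fun t => - df (1 - t)).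
Proof.
  intros [Hf Cf]. split.
  - intros t. replace (- df (1 - t)) with (df (1 - t) * (0 - 1)) by ring.
    apply (derivable_pt_lim_comp (fun t => 1 - t) f).
    + apply derivable_pt_lim_minus; [apply derivable_pt_lim_const | apply derivable_pt_lim_id].
    + apply Hf.
  - intros t. apply continuity_pt_opp, (continuity_pt_comp (fun t => 1 - t) df).
    + apply continuity_pt_minus;
        [apply continuity_pt_const; intros ??; auto | apply continuity_pt_id].
    + apply Cf.
Qed.

Lemma is_C1_power K x0 N :
  is_C1 (fun t => K * (t - x0) ^ N) (fun t => K * (INR N * (t - x0) ^ pred N)).
Proof.
  split.
  - intros t. cbv beta. apply is_derive_Reals. auto_derive; auto. unfold Rminus. ring.
  - intros t. apply continuity_pt_filterlim.
    apply (@ex_derive_continuous R_AbsRing R_NormedModule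
             (fun t => K * (INR N * (t - x0) ^ pred N))).
    auto_derive. auto.
Qed.

Lemma exists_power_gap c d D B : 0 < c < d -> 0 < D ->
  exists K N, 0 < K /\ (0 < N)%nat /\ K * c ^ N < D /\ B < K * d ^ N.
Proof.
  intros Hcd HD. set (r := d / c).
  assert (Hr : 1 < r) by (unfold r; apply Rlt_div_r; lra).
  destruct (Pow_x_infinity r) with (b := 2 * (Rabs B + 1) / D) as [N0 HN0].
  { rewrite Rabs_pos_eq; lra. }
  set (N := S N0). assert (HcN : 0 < c ^ N) by (apply pow_lt; lra).
  assert (HrN : 2 * (Rabs B + 1) / D <= r ^ N).
  { specialize (HN0 N ltac:(unfold N; lia)). rewrite Rabs_pos_eq in HN0; [lra|].
    apply pow_le; lra. }
  exists (D / (2 * c ^ N)), N. repeat split.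
  - apply Rdiv_lt_0_compat; lra.
  - unfold N; lia.
  - field_simplify; lra.
  - replace (d ^ N) with (r ^ N * c ^ N)
      by (rewrite <- Rpow_mult_distr; unfold r; f_equal; field; lra).
    replace (D / (2 * c ^ N) * (r ^ N * c ^ N)) with (D / 2 * r ^ N) by (field; lra).
    assert (D / 2 * (2 * (Rabs B + 1) / D) <= D / 2 * r ^ N) by (apply Rmult_le_compat_l; lra).
    replace (D / 2 * (2 * (Rabs B + 1) / D)) with (Rabs B + 1) in * by (field; lra).
    pose proof (Rle_abs B). lra.
Qed.

Section Monotone_by_test_functions.

Variable u : R -> R.
Hypothesis Hu : cont01 u.

Lemma cont01_nonincreasing_interior :
  (forall z phi dphi, 0 < z < 1 -> is_C1 phi dphi ->
     local_max (fun t => u t - phi t) z -> dphi z <= 0) ->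
  forall x y, 0 <= x -> x < y -> y < 1 -> u y <= u x.
Proof.
  intros Htest x y Hx Hxy Hy. apply Rnot_lt_le. intros Hlt.
  set (y' := (y + 1) / 2).
  (* [K (t - x)^N] is below [u y - u x] at [y] but above [u y' - u x] at [y'], so
     [u t - K (t - x)^N] has an interior maximum on [[x, y']], where [K (t - x)^N]
     has positive slope. *)
  destruct (exists_power_gap (y - x) (y' - x) (u y - u x) (u y' - u x))
    as [K [N [HK [HN [Hc Hd]]]]]; [unfold y'; lra | lra |].
  set (psi := fun t => ext01 u t - K * (t - x) ^ N).
  assert (Cpsi : forall c, x <= c <= y' -> continuity_pt psi c).
  { intros c _. apply continuity_minus;
      [apply ext01_continuity, Hu | eapply is_C1_continuity, is_C1_power]. }
  destruct (continuity_ab_maj psi x y') as [z [Hzmax Hz]]; [unfold y'; lra | exact Cpsi |].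
  assert (Hext : forall t, x <= t <= y' -> psi t = u t - K * (t - x) ^ N).
  { intros t Ht. unfold psi. rewrite ext01_id; [auto | unfold in01, y' in *; lra]. }
  assert (Hpsix : psi x = u x).
  { rewrite Hext by lra. rewrite Rminus_diag, pow_i by auto. ring. }
  assert (Hyz : psi y <= psi z) by (apply Hzmax; unfold y'; lra).
  rewrite Hext in Hyz by (unfold y'; lra).
  assert (Hxz : x < z).
  { destruct (Rle_lt_or_eq_dec _ _ (proj1 Hz)) as [|<-]; [auto | lra]. }
  assert (Hzy' : z < y').
  { destruct (Rle_lt_or_eq_dec _ _ (proj2 Hz)) as [|Ez]; [auto|].
    rewrite Ez, Hext in Hyz by lra. lra. }
  assert (Hdz : K * (INR N * (z - x) ^ pred N) <= 0).
  { apply (Htest z (fun t => K * (t - x) ^ N) (fun t => K * (INR N * (t - x) ^ pred N)));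
      [unfold y' in *; lra | apply is_C1_power |].
    exists (Rmin (z - x) (y' - z)). split; [apply Rmin_pos; lra|]. intros t Ht.
    pose proof (Rmin_l (z - x) (y' - z)). pose proof (Rmin_r (z - x) (y' - z)).
    apply Rabs_def2 in Ht. rewrite <- !Hext by lra. apply Hzmax; lra. }
  assert (0 < K * (INR N * (z - x) ^ pred N)).
  { apply Rmult_lt_0_compat; [auto|].
    apply Rmult_lt_0_compat; [apply lt_0_INR; auto | apply pow_lt; lra]. }
  lra.
Qed.

Lemma cont01_nonincreasing :
  (forall z phi dphi, 0 < z < 1 -> is_C1 phi dphi ->
     local_max (fun t => u t - phi t) z -> dphi z <= 0) ->
  forall x y, 0 <= x -> x <= y -> y <= 1 -> u y <= u x.
Proof.
  intros Htest x y Hx Hxy Hy.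
  destruct (Rle_lt_or_eq_dec _ _ Hxy) as [Hlt|<-]; [|lra].
  destruct (Rle_lt_or_eq_dec _ _ Hy) as [Hy1 | ->]; [apply cont01_nonincreasing_interior; auto|].
  apply Rnot_lt_le. intros H1.
  destruct (Hu 1 ltac:(unfold in01; lra) (u 1 - u x)) as [d [Hd Hd']]; [lra|].
  set (y0 := 1 - Rmin d (1 - x) / 2).
  pose proof (Rmin_l d (1 - x)). pose proof (Rmin_r d (1 - x)).
  assert (Hm : 0 < Rmin d (1 - x)) by (apply Rmin_pos; lra).
  assert (u y0 <= u x) by (apply cont01_nonincreasing_interior; auto; unfold y0; lra).
  assert (A : Rabs (u y0 - u 1) < u 1 - u x).
  { apply Hd'; [unfold in01, y0; lra | unfold y0; rewrite Rabs_left; lra]. }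
  apply Rabs_def2 in A. lra.
Qed.

End Monotone_by_test_functions.

Lemma cont01_reflect u : cont01 u -> cont01 (fun t => u (1 - t)).
Proof.
  intros Hu x Hx eps Heps.
  destruct (Hu (1 - x) ltac:(unfold in01 in *; lra) eps Heps) as [d [Hd Hd']].
  exists d; split; auto. intros y Hy Hyx. apply Hd'; [unfold in01 in *; lra|].
  replace (1 - y - (1 - x)) with (- (y - x)) by ring. rewrite Rabs_Ropp. auto.
Qed.

Lemma cont01_nondecreasing u : cont01 u ->
  (forall z phi dphi, 0 < z < 1 -> is_C1 phi dphi ->
     local_max (fun t => u t - phi t) z -> 0 <= dphi z) ->
  forall x y, 0 <= x -> x <= y -> y <= 1 -> u x <= u y.
Proof.
  intros Hu Htest x y Hx Hxy Hy.
  replace x with (1 - (1 - x)) by ring. replace y with (1 - (1 - y)) by ring.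
  apply (cont01_nonincreasing (fun t => u (1 - t))); [apply cont01_reflect; auto| |lra..].
  intros z phi dphi Hz Hphi [d [Hd Hmax]].
  assert (Hrefl : 0 <= - dphi (1 - (1 - z))).
  { apply (Htest (1 - z) (fun t => phi (1 - t)) (fun t => - dphi (1 - t)));
      [lra | apply is_C1_reflect; auto |].
    exists d. split; auto. intros t Ht.
    specialize (Hmax (1 - t)). replace (1 - (1 - t)) with t in Hmax by ring.
    replace (1 - (1 - z)) with z by ring. apply Hmax.
    replace (1 - t - z) with (- (t - (1 - z))) by ring. rewrite Rabs_Ropp. auto. }
  replace (1 - (1 - z)) with z in Hrefl by ring. lra.
Qed.

Lemma deriv_pos_left_lt k x L : derivable_pt_lim k x L -> 0 < L -> forall d, 0 < d ->
  exists t, x - d < t < x /\ k t < k x.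
Proof.
  intros Hk HL d Hd. destruct (Hk (L / 2)) as [del Hdel]; [lra|].
  set (h := - Rmin d del / 2).
  assert (Hm : 0 < Rmin d del) by (apply Rmin_pos; [lra | apply cond_pos]).
  pose proof (Rmin_l d del). pose proof (Rmin_r d del).
  specialize (Hdel h ltac:(unfold h; lra) ltac:(rewrite Rabs_left; unfold h; lra)).
  apply Rabs_def2 in Hdel.
  exists (x + h). split; [unfold h; lra|].
  assert (Hq : 0 < (k (x + h) - k x) / h) by lra.
  assert (k (x + h) - k x = (k (x + h) - k x) / h * h) by (field; unfold h; lra).
  assert ((k (x + h) - k x) / h * h < 0) by (apply Rmult_pos_neg; [lra | unfold h; lra]).
  lra.
Qed.

Lemma subtangent_left_slope_le f phi x L L' :
  derivable_pt_lim f x L -> derivable_pt_lim phi x L' -> phi x = f x ->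
  (exists d, 0 < d /\ forall t, x - d < t < x -> phi t <= f t) -> L <= L'.
Proof.
  intros Hf Hphi Hx [d [Hd Hle]]. apply Rnot_lt_le. intros Hlt.
  destruct (deriv_pos_left_lt (fun t => f t - phi t) x (L - L')
              (derivable_pt_lim_minus f phi x L L' Hf Hphi) ltac:(lra) d Hd) as [t [Ht Hlt']].
  specialize (Hle t Ht). lra.
Qed.

Lemma le_of_forall_small_shift A B c : (forall th, 0 < th < 1 -> A - th * B <= c) -> A <= c.
Proof.
  intros Hth. apply Rnot_lt_le. intros Hlt.
  pose proof (Rabs_pos B).
  set (e := (A - c) / (2 * (Rabs B + 1))).
  assert (Ee : e * Rabs B + e = (A - c) / 2) by (unfold e; field; lra).
  assert (He : 0 < e) by (unfold e; apply Rdiv_lt_0_compat; lra).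
  set (th := Rmin (1 / 2) e).
  pose proof (Rmin_l (1 / 2) e). pose proof (Rmin_r (1 / 2) e).
  assert (Hth0 : 0 < th) by (apply Rmin_pos; lra).
  assert (th * B <= e * Rabs B).
  { apply Rle_trans with (th * Rabs B).
    - apply Rmult_le_compat_l; [lra | apply Rle_abs].
    - apply Rmult_le_compat_r; [lra | exact (Rmin_r _ _)]. }
  specialize (Hth th ltac:(unfold th in *; lra)). lra.
Qed.

Section Hamiltonian.

Variable H : R -> R -> R.
Hypothesis Hcont : H_cont01 H.
Hypothesis Hcoer : coercive01 H.
Hypothesis Hqc : quasiconvex01 H.
Hypothesis Hint : interior_cond01 H.

Lemma H_cont_in_s x p eps : in01 x -> 0 < eps -> exists d, 0 < d /\
  forall y, in01 y -> Rabs (y - x) < d -> Rabs (H y p - H x p) < eps.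
Proof.
  intros Hx Heps. destruct (Hcont x p Hx eps Heps) as [d [Hd Hd']].
  exists d; split; auto. intros y Hy Hyx. apply Hd'; auto.
  rewrite Rminus_diag, Rabs_R0; lra.
Qed.

Lemma H_continuity s : in01 s -> continuity (H s).
Proof.
  intros Hs p eps Heps. destruct (Hcont s p Hs eps Heps) as [d [Hd Hd']].
  exists d; split; [lra|]. intros q [_ Hq]. apply Hd'; auto.
  rewrite Rminus_diag, Rabs_R0; lra.
Qed.

Lemma quasiconvex_between s p q r c : in01 s -> H s p <= c -> H s q <= c ->
  Rmin p q <= r <= Rmax p q -> H s r <= c.
Proof.
  intros Hs Hp Hq Hr. destruct (Req_dec p q) as [<-|Hpq].
  { rewrite Rmin_left, Rmax_left in Hr by lra. replace r with p by lra. auto. }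
  replace r with ((r - q) / (p - q) * p + (1 - (r - q) / (p - q)) * q) by (field; lra).
  apply Hqc; auto.
  unfold Rmin, Rmax in Hr; destruct Rle_dec in Hr.
  - replace ((r - q) / (p - q)) with ((q - r) / (q - p)) by (field; lra).
    split; [apply Rdiv_le_0_compat; lra|].
    apply Rmult_le_reg_r with (q - p); [lra|]. field_simplify; lra.
  - split; [apply Rdiv_le_0_compat; lra|].
    apply Rmult_le_reg_r with (p - q); [lra|]. field_simplify; lra.
Qed.

Lemma sublevel_strict_between s p q r c : in01 s -> H s p <= c -> H s q <= c ->
  p < r < q -> H s r < c.
Proof.
  intros Hs Hp Hq Hr. apply (proj1 (Hint s c r Hs)).
  exists (Rmin (r - p) (q - r)). split; [apply Rmin_pos; lra|].
  intros x Hx. apply (quasiconvex_between s p q); auto.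
  rewrite Rmin_left, Rmax_right by lra.
  pose proof (Rmin_l (r - p) (q - r)). pose proof (Rmin_r (r - p) (q - r)).
  apply Rabs_def2 in Hx. lra.
Qed.

Lemma exists_level_point_right s b p : in01 s -> H s p < b -> exists z, p < z /\ H s z = b.
Proof.
  intros Hs Hp. destruct (Hcoer b) as [K HK].
  set (q := Rmax p K + 1).
  assert (Hpq : p < q) by (pose proof (Rmax_l p K); unfold q; lra).
  assert (Hbq : b < H s q).
  { apply HK; auto. pose proof (Rmax_r p K). eapply Rlt_le_trans; [|apply Rle_abs]. unfold q; lra. }
  assert (C : continuity (fun x => H s x - b)).
  { apply continuity_minus; [apply H_continuity; auto | apply continuity_const; intros ??; auto]. }
  destruct (IVT _ p q C Hpq) as [z [Hz Hz0]]; [lra|lra|].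
  exists z. split; [|lra]. destruct (Rle_lt_or_eq_dec _ _ (proj1 Hz)) as [|<-]; [auto | lra].
Qed.

Lemma gt_above_level_max s b v p : in01 s -> is_max_elem (fun p => H s p = b) v ->
  v < p -> b < H s p.
Proof.
  intros Hs [_ Hmax] Hvp. destruct (Rlt_le_dec b (H s p)) as [|Hle]; auto. exfalso.
  destruct (Rle_lt_or_eq_dec _ _ Hle) as [Hlt|Heq]; [|specialize (Hmax p Heq); lra].
  destruct (exists_level_point_right s b p Hs Hlt) as [z [Hpz Hz]].
  specialize (Hmax z Hz). lra.
Qed.

Lemma level_max_exists s m b : in01 s -> is_min_value (H s) m -> m < b ->
  exists v, is_max_elem (fun p => H s p = b) v.
Proof.
  intros Hs [[p0 Hp0] _] Hmb.
  set (E := fun p => H s p = b).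
  assert (HE : exists p, E p).
  { destruct (exists_level_point_right s b p0 Hs) as [z [_ Hz]]; [lra|]. exists z; exact Hz. }
  assert (BE : bound E).
  { destruct (Hcoer b) as [K HK]. exists K. intros p Hp.
    destruct (Rle_lt_dec p K) as [|HKp]; auto. exfalso.
    assert (b < H s p) by (apply HK; auto; eapply Rlt_le_trans; [exact HKp|apply Rle_abs]).
    unfold E in Hp; lra. }
  destruct (completeness E BE HE) as [v [Hub Hleast]].
  exists v. split; [|exact Hub].
  (* [E] is closed, so it contains its supremum. *)
  destruct (Req_dec (H s v) b) as [|Hne]; auto. exfalso.
  destruct (Hcont s v Hs (Rabs (H s v - b))) as [d [Hd Hd']]; [apply Rabs_pos_lt; lra|].
  assert (U : is_upper_bound E (v - d / 2)).
  { intros p Hp. destruct (Rle_lt_dec p (v - d / 2)) as [|Hlt]; auto. exfalso.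
    assert (p <= v) by (apply Hub; auto).
    assert (A : Rabs (H s p - H s v) < Rabs (H s v - b)).
    { apply Hd'; auto; [rewrite Rminus_diag, Rabs_R0 | apply Rabs_def1]; lra. }
    unfold E in Hp. rewrite Hp, <- Rabs_Ropp in A.
    replace (- (b - H s v)) with (H s v - b) in A by ring. lra. }
  specialize (Hleast _ U). lra.
Qed.

Lemma min_value_gt_below_level_max s m v p : in01 s -> is_min_value (H s) m ->
  is_max_elem (fun p => H s p = m) v -> p < v -> m < H s p.
Proof.
  intros Hs [_ Hmin] [Hv _] Hpv. cbv beta in Hv.
  destruct (Rle_lt_or_eq_dec _ _ (Hmin p)) as [|Hp]; auto. exfalso.
  assert (Hmid : H s ((p + v) / 2) < m).
  { apply (sublevel_strict_between s p v); [exact Hs | lra | lra | lra]. }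
  specialize (Hmin ((p + v) / 2)). lra.
Qed.

Section Level_max.

Variables (b : R) (sg : R -> R).
Hypothesis Hsg : forall s, in01 s -> is_max_elem (fun p => H s p = b) (sg s).

Lemma level_max_separated x q : in01 x -> b < H x q -> exists d, 0 < d /\
  forall y, in01 y -> Rabs (y - x) < d -> ~ (Rmin (sg x) (sg y) <= q <= Rmax (sg x) (sg y)).
Proof.
  intros Hx Hq. set (c := (b + H x q) / 2).
  destruct (H_cont_in_s x q (H x q - c) Hx) as [d1 [Hd1 Hq1]]; [unfold c; lra|].
  destruct (H_cont_in_s x (sg x) (c - b) Hx) as [d2 [Hd2 Hs2]]; [unfold c; lra|].
  exists (Rmin d1 d2); split; [apply Rmin_pos; auto|]. intros y Hy Hyx Hbetween.
  specialize (Hq1 y Hy (Rlt_le_trans _ _ _ Hyx (Rmin_l _ _))).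
  specialize (Hs2 y Hy (Rlt_le_trans _ _ _ Hyx (Rmin_r _ _))).
  rewrite (proj1 (Hsg x Hx)) in Hs2.
  apply Rabs_def2 in Hq1; apply Rabs_def2 in Hs2.
  assert (H y q <= c).
  { apply (quasiconvex_between y (sg x) (sg y)); auto; [lra|].
    rewrite (proj1 (Hsg y Hy)). unfold c; lra. }
  lra.
Qed.

Lemma level_max_lower_near x q : in01 x -> q < sg x -> H x q <> b -> exists d, 0 < d /\
  forall y, in01 y -> Rabs (y - x) < d -> q < sg y.
Proof.
  intros Hx Hq Hne. destruct (Rlt_le_dec (H x q) b) as [Hlt|Hge].
  - destruct (H_cont_in_s x q (b - H x q) Hx) as [d [Hd Hd']]; [lra|].
    exists d; split; auto. intros y Hy Hyx.
    specialize (Hd' y Hy Hyx). apply Rabs_def2 in Hd'.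
    destruct (Rlt_le_dec q (sg y)) as [|Hle]; auto. exfalso.
    destruct (Rle_lt_or_eq_dec _ _ Hle) as [Hlt'|Heq].
    + assert (b < H y q) by (apply (gt_above_level_max y b (sg y)); auto). lra.
    + rewrite <- Heq in Hd'. rewrite (proj1 (Hsg y Hy)) in Hd'. lra.
  - destruct (level_max_separated x q Hx) as [d [Hd Hd']]; [lra|].
    exists d; split; auto. intros y Hy Hyx.
    destruct (Rlt_le_dec q (sg y)) as [|Hle]; auto. exfalso. apply (Hd' y Hy Hyx).
    rewrite Rmin_right, Rmax_left; lra.
Qed.

Lemma level_max_continuous : cont01 sg.
Proof.
  intros x Hx eps Heps.
  destruct (level_max_separated x (sg x + eps) Hx) as [d1 [Hd1 Hup]].
  { apply (gt_above_level_max x b (sg x)); auto; lra. }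
  assert (Hq : exists q, sg x - eps < q < sg x /\ H x q <> b).
  { destruct (Req_dec (H x (sg x - eps / 2)) b) as [Hb|Hb].
    - exists (sg x - eps / 4). split; [lra|].
      apply Rlt_not_eq, (sublevel_strict_between x (sg x - eps / 2) (sg x)); auto; try lra.
      rewrite (proj1 (Hsg x Hx)); lra.
    - exists (sg x - eps / 2). split; [lra | exact Hb]. }
  destruct Hq as [q [Hq Hqb]].
  destruct (level_max_lower_near x q Hx) as [d2 [Hd2 Hlow]]; [lra|exact Hqb|].
  exists (Rmin d1 d2); split; [apply Rmin_pos; auto|]. intros y Hy Hyx.
  specialize (Hup y Hy (Rlt_le_trans _ _ _ Hyx (Rmin_l _ _))).
  specialize (Hlow y Hy (Rlt_le_trans _ _ _ Hyx (Rmin_r _ _))).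
  apply Rabs_def1; [|lra].
  destruct (Rlt_le_dec (sg y) (sg x + eps)) as [|Hge]; [lra|].
  exfalso. apply Hup. rewrite Rmin_left, Rmax_right; lra.
Qed.

End Level_max.

Lemma exists_strict_sublevel_slope m b a sg :
  (forall s, in01 s -> is_min_value (H s) (m s)) -> (forall s, in01 s -> m s < b) -> b < a ->
  (forall s, in01 s -> is_max_elem (fun p => H s p = a) (sg s)) ->
  exists tau, cont01 tau /\
    forall z th, in01 z -> 0 < th < 1 -> H z ((1 - th) * sg z + th * tau z) < a.
Proof.
  intros Hm Hmb Hba Hsg.
  destruct (functional_choice (fun z v => in01 z -> is_max_elem (fun p => H z p = b) v))
    as [tau Htau].
  { intros z. destruct (Rle_dec 0 z) as [H0|H0]; [destruct (Rle_dec z 1) as [H1|H1]|].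
    - destruct (level_max_exists z (m z) b (conj H0 H1) (Hm z (conj H0 H1)) (Hmb z (conj H0 H1)))
        as [v Hv].
      exists v; auto.
    - exists 0. unfold in01. lra.
    - exists 0. unfold in01. lra. }
  exists tau. split; [exact (level_max_continuous b tau Htau)|].
  intros z th Hz Hth.
  assert (Hb := proj1 (Htau z Hz)). assert (Ha := proj1 (Hsg z Hz)). cbv beta in Hb, Ha.
  assert (Hts : tau z < sg z).
  { destruct (Rlt_le_dec (tau z) (sg z)) as [|Hle]; auto.
    destruct (Rle_lt_or_eq_dec _ _ Hle) as [Hlt|Heq].
    - assert (a < H z (tau z)) by (apply (gt_above_level_max z a (sg z)); auto). lra.
    - rewrite Heq in Ha. lra. }
  apply (sublevel_strict_between z (tau z) (sg z)); [auto | lra | lra |].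
  split; nra.
Qed.

Section Solution.

Variables (a : R) (w : R -> R).
Hypothesis Hw : cont01 w.

Definition constrained_super_at_1 : Prop :=
  forall phi dphi, is_C1 phi dphi -> phi 1 = w 1 ->
    (exists d, 0 < d /\ forall x, 1 - d < x < 1 -> phi x <= w x) -> a <= H 1 (dphi 1).

Lemma visc_sub_touch_minus_prim g z phi dphi : visc_sub H a w -> cont01 g -> 0 < z < 1 ->
  is_C1 phi dphi -> local_max (fun t => (w t - prim01 g t) - phi t) z -> H z (g z + dphi z) <= a.
Proof.
  intros Hsub Hg Hz Hphi [d [Hd Hmax]].
  rewrite <- (ext01_id g z) by (unfold in01; lra).
  apply (Hsub z Hz (fun t => prim01 g t + phi t) (fun t => ext01 g t + dphi t)).
  - apply is_C1_plus; [apply prim01_C1 | ]; auto.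
  - exists d; split; auto. intros t Ht. specialize (Hmax t Ht). lra.
Qed.

Lemma sub_minus_prim_nonincreasing g : visc_sub H a w -> cont01 g ->
  (forall z p, in01 z -> g z < p -> a < H z p) ->
  forall x y, 0 <= x -> x <= y -> y <= 1 -> w y - w x <= prim01 g y - prim01 g x.
Proof.
  intros Hsub Hg Habove x y Hx Hxy Hy.
  enough (w y - prim01 g y <= w x - prim01 g x) by lra.
  apply (cont01_nonincreasing (fun t => w t - prim01 g t)); auto.
  - apply cont01_minus; [auto | apply continuity_cont01, prim01_continuity, Hg].
  - intros z phi dphi Hz Hphi Hmax. apply Rnot_lt_le. intros Hpos.
    assert (H z (g z + dphi z) <= a) by (eapply visc_sub_touch_minus_prim; eauto).
    assert (a < H z (g z + dphi z)) by (apply Habove; [unfold in01 | ]; lra).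
    lra.
Qed.

Lemma sub_minus_prim_nondecreasing g : visc_sub H a w -> cont01 g ->
  (forall z p, in01 z -> p < g z -> a < H z p) ->
  forall x y, 0 <= x -> x <= y -> y <= 1 -> prim01 g y - prim01 g x <= w y - w x.
Proof.
  intros Hsub Hg Hbelow x y Hx Hxy Hy.
  enough (w x - prim01 g x <= w y - prim01 g y) by lra.
  apply (cont01_nondecreasing (fun t => w t - prim01 g t)); auto.
  - apply cont01_minus; [auto | apply continuity_cont01, prim01_continuity, Hg].
  - intros z phi dphi Hz Hphi Hmax. apply Rnot_lt_le. intros Hneg.
    assert (H z (g z + dphi z) <= a) by (eapply visc_sub_touch_minus_prim; eauto).
    assert (a < H z (g z + dphi z)) by (apply Hbelow; [unfold in01 | ]; lra).
    lra.
Qed.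

Lemma visc_super_min_at_0 phi dphi : visc_super H a w -> constrained_super_at_1 ->
  is_C1 phi dphi -> (forall z, in01 z -> H z (dphi z) < a) ->
  forall s, in01 s -> w 0 - phi 0 <= w s - phi s.
Proof.
  intros Hsup Hconstr Hphi Hstrict s Hs.
  set (v := fun t => ext01 w t - phi t).
  destruct (continuity_ab_min v 0 1) as [z [Hzmin Hz]]; [lra | |].
  { intros c _. apply continuity_minus;
      [apply ext01_continuity, Hw | eapply is_C1_continuity, Hphi]. }
  assert (Hmin : forall t, in01 t -> w z - phi z <= w t - phi t).
  { intros t Ht. specialize (Hzmin t Ht). unfold v in Hzmin.
    rewrite !ext01_id in Hzmin; auto. }
  destruct (Rle_lt_or_eq_dec _ _ (proj1 Hz)) as [Hz0 | <-]; [exfalso | apply Hmin; auto].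
  specialize (Hstrict z Hz).
  destruct (Rle_lt_or_eq_dec _ _ (proj2 Hz)) as [Hz1 | ->].
  - assert (a <= H z (dphi z)); [|lra].
    apply (Hsup z (conj Hz0 Hz1) phi dphi Hphi).
    exists (Rmin z (1 - z)). split; [apply Rmin_pos; lra|]. intros t Ht.
    pose proof (Rmin_l z (1 - z)). pose proof (Rmin_r z (1 - z)).
    apply Rabs_def2 in Ht. apply Hmin. unfold in01; lra.
  - assert (a <= H 1 (dphi 1)); [|lra].
    apply (Hconstr (fun t => phi t + (w 1 - phi 1)) dphi); [apply is_C1_plus_const; auto | ring |].
    exists 1. split; [lra|]. intros x Hx.
    assert (w 1 - phi 1 <= w x - phi x) by (apply Hmin; unfold in01; lra). lra.
Qed.

Variable sg : R -> R.
Hypothesis Hsg : forall s, in01 s -> is_max_elem (fun p => H s p = a) (sg s).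

Lemma sub_increment_le_prim : visc_sub H a w -> cont01 sg ->
  forall s, in01 s -> w s - w 0 <= prim01 sg s.
Proof.
  intros Hsub Hsc s Hs.
  assert (Habove : forall z p, in01 z -> sg z < p -> a < H z p).
  { intros z p Hz Hp. apply (gt_above_level_max z a (sg z)); auto. }
  enough (w s - w 0 <= prim01 sg s - prim01 sg 0) by (rewrite prim01_0 in *; lra).
  apply (sub_minus_prim_nonincreasing sg Hsub Hsc Habove); unfold in01 in Hs; lra.
Qed.

Lemma prim_le_increment_of_min_level : visc_sub H a w -> cont01 sg ->
  (forall s, in01 s -> is_min_value (H s) a) -> forall s, in01 s -> prim01 sg s <= w s - w 0.
Proof.
  intros Hsub Hsc Hmin s Hs.
  assert (Hbelow : forall z p, in01 z -> p < sg z -> a < H z p).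
  { intros z p Hz Hp. apply (min_value_gt_below_level_max z a (sg z)); auto. }
  enough (prim01 sg s - prim01 sg 0 <= w s - w 0) by (rewrite prim01_0 in *; lra).
  apply (sub_minus_prim_nondecreasing sg Hsub Hsc Hbelow); unfold in01 in Hs; lra.
Qed.

Lemma prim_le_increment_of_constraint m b : visc_super H a w -> constrained_super_at_1 ->
  cont01 sg -> (forall s, in01 s -> is_min_value (H s) (m s)) ->
  (forall s, in01 s -> m s < b) -> b < a -> forall s, in01 s -> prim01 sg s <= w s - w 0.
Proof.
  intros Hsup Hconstr Hsc Hm Hmb Hba s Hs.
  destruct (exists_strict_sublevel_slope m b a sg Hm Hmb Hba Hsg) as [tau [Htc Hstrict]].
  (* the primitive of [(1 - th) sg + th tau] is a strict subsolution; let [th] tend to 0 *)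
  apply (le_of_forall_small_shift _ (prim01 sg s - prim01 tau s)). intros th Hth.
  assert (Hle : w 0 - ((1 - th) * prim01 sg 0 + th * prim01 tau 0)
                <= w s - ((1 - th) * prim01 sg s + th * prim01 tau s)).
  { apply (visc_super_min_at_0 (fun t => (1 - th) * prim01 sg t + th * prim01 tau t)
             (fun t => (1 - th) * ext01 sg t + th * ext01 tau t)); auto.
    - apply is_C1_plus; apply is_C1_scal, prim01_C1; auto.
    - intros z Hz. rewrite !ext01_id by auto. apply Hstrict; auto. }
  rewrite !prim01_0 in Hle. lra.
Qed.

Lemma constrained_super_of_prim : cont01 sg ->
  (forall s, in01 s -> w s = w 0 + prim01 sg s) -> constrained_super_at_1.
Proof.
  intros Hsc Hrepr phi dphi Hphi Hphi1 [d [Hd Hsub]].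
  assert (in1 : in01 1) by (unfold in01; lra).
  assert (Hslope : sg 1 <= dphi 1).
  { rewrite <- (ext01_id sg 1) by auto.
    apply (subtangent_left_slope_le (fun t => w 0 + prim01 sg t) phi 1).
    - replace (ext01 sg 1) with (0 + ext01 sg 1) by ring.
      apply derivable_pt_lim_plus; [apply derivable_pt_lim_const | apply prim01_derive, Hsc].
    - apply (proj1 Hphi).
    - rewrite Hphi1, Hrepr; auto.
    - exists (Rmin d 1). split; [apply Rmin_pos; lra|]. intros t Ht.
      pose proof (Rmin_l d 1). pose proof (Rmin_r d 1).
      rewrite <- Hrepr by (unfold in01; lra). apply Hsub. lra. }
  destruct (Rle_lt_or_eq_dec _ _ Hslope) as [Hlt | <-].
  - left. apply (gt_above_level_max 1 a (sg 1)); auto.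
  - right. symmetry. exact (proj1 (Hsg 1 in1)).
Qed.

End Solution.

End Hamiltonian.

Theorem proposition5p3 (H : R -> R -> R) (mH : R -> R) (aH a : R) (sigma w : R -> R)
  (Hcont : H_cont01 H) (Hcoer : coercive01 H) (Hqc : quasiconvex01 H)
  (Hint : interior_cond01 H)
  (HmH : forall s, in01 s -> is_min_value (H s) (mH s))
  (HaH : is_max_on mH in01 aH)
  (Ha : aH <= a)
  (Hconst : a = aH -> forall s t, in01 s -> in01 t -> mH s = mH t)
  (Hsig : forall s, in01 s -> is_max_elem (fun p => H s p = a) (sigma s))
  (Hw : cont01 w) (Hvisc : visc_sol H a w) :
  (forall phi dphi, is_C1 phi dphi -> phi 1 = w 1 ->
     (exists d, 0 < d /\ forall x, 1 - d < x < 1 -> phi x <= w x) ->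
     a <= H 1 (dphi 1))
  <->
  (forall s, in01 s ->
     exists pr : Riemann_integrable sigma 0 s, w s = w 0 + RiemannInt pr).
Proof.
  destruct Hvisc as [Hsub Hsup].
  pose proof (level_max_continuous H Hcont Hcoer Hqc Hint a sigma Hsig) as Hsc.
  assert (Hrepr : (forall s, in01 s -> exists pr : Riemann_integrable sigma 0 s,
                     w s = w 0 + RiemannInt pr)
                  <-> (forall s, in01 s -> w s = w 0 + prim01 sigma s)).
  { split; intros Hrepr s Hs; apply (RiemannInt_prim01 sigma s Hsc Hs); auto. }
  rewrite Hrepr. split; [intros Hconstr s Hs | apply constrained_super_of_prim; auto].
  assert (Hup := sub_increment_le_prim H Hcont Hcoer a w Hw sigma Hsig Hsub Hsc s Hs).
  assert (Hlow : prim01 sigma s <= w s - w 0).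
  { destruct (Req_dec a aH) as [Heq | Hneq].
    - apply (prim_le_increment_of_min_level H Hqc Hint a w Hw sigma Hsig Hsub Hsc); auto.
      intros z Hz. destruct (proj1 HaH) as [s0 [Hs0 Hms0]].
      rewrite Heq, <- Hms0, <- (Hconst Heq z s0 Hz Hs0). auto.
    - apply (prim_le_increment_of_constraint H Hcont Hcoer Hqc Hint a w Hw sigma Hsig
               mH ((a + aH) / 2)); auto; [|lra].
      intros z Hz. pose proof (proj2 HaH z Hz). lra. }
  lra.
Qed.
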